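(* Let $\Lambda$ be a finite-dimensional algebra over an algebraically closed field $k$ and let $M_1,M_2$ be nonzero uniserial $\Lambda$-modules. Let $$\mathcal{S}(M_1,M_2)=\{1\le l\le\min\{\ell\ell(M_1),\ell\ell(M_2)\}: M_1/J^l(M_1)\simeq \mathrm{Soc}^l(M_2)\}.$$ For each $l\in\mathcal{S}(M_1,M_2)$ fix an isomorphism $M_1/J^l(M_1)\simeq\mathrm{Soc}^l(M_2)$ and let $\alpha_l$ be the composition $M_1\twoheadrightarrow M_1/J^l(M_1)\simeq\mathrm{Soc}^l(M_2)\hookrightarrow M_2$. Then $\{\alpha_l: l\in\mathcal{S}(M_1,M_2)\}$ is a $k$-basis of $\mathrm{Hom}_\Lambda(M_1,M_2)$.
   Context: $J$ denotes the Jacobson radical, $J^l(M)$ the $l$-th radical power of $M$, $\mathrm{Soc}^l(M)$ the $l$-th term of the socle series of $M$, and $\ell\ell(M)$ the Loewy length (smallest $d$ with $J^d(M)=0$). A module is uniserial if its submodules are totally ordered by inclusion. *)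

From HB Require Import structures.
From mathcomp Require Import all_boot all_order all_algebra.
From mathcomp Require Import falgebra.
Set Implicit Arguments. Unset Strict Implicit. Unset Printing Implicit Defensive.
Import GRing.Theory.
Local Open Scope ring_scope.

(* A finite-dimensional (right) module over the finite-dimensional
   F-algebra A, of F-dimension n, is given by a unital algebra morphism
   rho : A -> 'M_n acting on row vectors:  v . a := v *m rho a. *)
Definition is_rmodule (F : fieldType) (A : falgType F) (n : nat)
  (rho : A -> 'M[F]_n) : Prop :=
  [/\ forall (c : F) (a b : A), rho (c *: a + b) = c *: rho a + rho b,
      rho 1 = 1%:M
    & forall a b : A, rho (a * b) = rho a *m rho b].

Definition vset (F : fieldType) (n : nat) := 'rV[F]_n -> Prop.

Definition sub_le (F : fieldType) (n : nat) (U W : vset F n) : Prop :=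
  forall v, U v -> W v.

Definition zero_set (F : fieldType) (n : nat) : vset F n := fun v => v = 0.

Definition issub (F : fieldType) (A : falgType F) (n : nat)
  (rho : A -> 'M[F]_n) (U : vset F n) : Prop :=
  [/\ U 0,
      forall u v, U u -> U v -> U (u + v),
      forall (c : F) u, U u -> U (c *: u)
    & forall (a : A) u, U u -> U (u *m rho a)].

(* W is a submodule containing N such that W/N is a simple module *)
Definition relsimple (F : fieldType) (A : falgType F) (n : nat)
  (rho : A -> 'M[F]_n) (N W : vset F n) : Prop :=
  [/\ issub rho W, sub_le N W, (exists v, W v /\ ~ N v)
    & forall X, issub rho X -> sub_le N X -> sub_le X W ->
        sub_le X N \/ sub_le W X].

(* radical of a submodule U: intersection of its maximal submodules *)
Definition rad (F : fieldType) (A : falgType F) (n : nat)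
  (rho : A -> 'M[F]_n) (U : vset F n) : vset F n :=
  fun v => U v /\ forall W, issub rho W -> relsimple rho W U -> W v.

Definition radpow (F : fieldType) (A : falgType F) (n : nat)
  (rho : A -> 'M[F]_n) (l : nat) : vset F n :=
  iter l (rad rho) (fun _ => True).

(* preimage in M of Soc(M/N): the submodule generated by N and all W with
   W/N simple *)
Definition relsoc (F : fieldType) (A : falgType F) (n : nat)
  (rho : A -> 'M[F]_n) (N : vset F n) : vset F n :=
  fun v => forall X, issub rho X -> sub_le N X ->
    (forall W, relsimple rho N W -> sub_le W X) -> X v.

Definition socpow (F : fieldType) (A : falgType F) (n : nat)
  (rho : A -> 'M[F]_n) (l : nat) : vset F n :=
  iter l (relsoc rho) (@zero_set F n).

Definition loewy_length (F : fieldType) (A : falgType F) (n : nat)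
  (rho : A -> 'M[F]_n) (d : nat) : Prop :=
  sub_le (radpow rho d) (@zero_set F n) /\
  forall d', (d' < d)%N -> ~ sub_le (radpow rho d') (@zero_set F n).

Definition uniserial (F : fieldType) (A : falgType F) (n : nat)
  (rho : A -> 'M[F]_n) : Prop :=
  forall U W, issub rho U -> issub rho W -> sub_le U W \/ sub_le W U.

Definition is_hom (F : fieldType) (A : falgType F) (n1 n2 : nat)
  (rho1 : A -> 'M[F]_n1) (rho2 : A -> 'M[F]_n2) (f : 'M[F]_(n1, n2)) : Prop :=
  forall a : A, rho1 a *m f = f *m rho2 a.

(* f is the composite M1 ->> M1/J^l(M1) ~ Soc^l(M2) >-> M2 of some
   isomorphism, i.e. a homomorphism with kernel J^l(M1) and image Soc^l(M2) *)
Definition quot_rad_iso_soc (F : fieldType) (A : falgType F) (n1 n2 : nat)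
  (rho1 : A -> 'M[F]_n1) (rho2 : A -> 'M[F]_n2) (l : nat)
  (f : 'M[F]_(n1, n2)) : Prop :=
  [/\ is_hom rho1 rho2 f,
      (forall v, v *m f = 0 <-> radpow rho1 l v)
    & (forall w, socpow rho2 l w <-> exists v, w = v *m f)].

Definition Sset (F : fieldType) (A : falgType F) (n1 n2 : nat)
  (rho1 : A -> 'M[F]_n1) (rho2 : A -> 'M[F]_n2) (d1 d2 l : nat) : Prop :=
  (1 <= l <= minn d1 d2)%N /\ exists f, quot_rad_iso_soc rho1 rho2 l f.

From Pilot Require Import Defs.
From HB Require Import structures.
From mathcomp Require Import all_boot all_order all_algebra.
From mathcomp Require Import falgebra zify.
From Stdlib Require Import Classical FunctionalExtensionality PropExtensionality.
Set Implicit Arguments. Unset Strict Implicit. Unset Printing Implicit Defensive.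
Import GRing.Theory.
Local Open Scope ring_scope.

(* In a uniserial module every submodule is a term of the socle series
   0 = Soc^0 < Soc^1 < ... < Soc^e = M, whose factors are simple, and
   J^l = Soc^(e-l).  If a homomorphism f : M1 -> M2 has image Soc^l(M2),
   pulling the socle series of M2 back along f yields the socle series of M1
   shifted by e1 - l, so ker f = J^l(M1) and l lies in S(M1,M2).
   Spanning goes by induction on the least l with Im f <= Soc^l(M2): both f
   and alpha_l induce maps from the simple top M1/J(M1) to the simple factor
   Soc^l/Soc^(l-1), and Schur's lemma over the algebraically closed field
   gives c with Im (f - c alpha_l) <= Soc^(l-1).  Independence: in a vanishing
   combination, the term of largest index with nonzero coefficient has image
   Soc^l(M2), which is not contained in Soc^(l-1)(M2), where all other terms
   land. *)

Lemma ex_least_nat (P : nat -> Prop) k :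
  P k -> exists e, P e /\ forall j, (j < e)%N -> ~ P j.
Proof.
elim/ltn_ind: k => k IH Pk.
have [[j [jk Pj]]|nP] := classic (exists j, (j < k)%N /\ P j); first exact: IH Pj.
by exists k; split=> // j jk Pj; apply: nP; exists j.
Qed.

Section Subspaces.
Variables (F : fieldType) (n : nat).
Implicit Types (U W X : vset F n).

Lemma vset_ext U W : sub_le U W -> sub_le W U -> U = W.
Proof.
move=> UW WU; apply: functional_extensionality => v.
by apply: propositional_extensionality; split=> [/UW|/WU].
Qed.

Definition subspace U : Prop :=
  [/\ U 0, forall u v, U u -> U v -> U (u + v) & forall (c : F) u, U u -> U (c *: u)].

Lemma subspace_sum U (I : Type) (r : seq I) (P : pred I) (G : I -> 'rV_n) :
  subspace U -> (forall i, P i -> U (G i)) -> U (\sum_(i <- r | P i) G i).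
Proof. by case=> U0 UD _ UG; elim/big_rec: _ => // i x Pi; apply/UD/UG. Qed.

Lemma subspace_mulmx U m (B : 'M_(m, n)) (x : 'rV_m) :
  subspace U -> (forall i, U (row i B)) -> U (x *m B).
Proof.
move=> sU UB; rewrite mulmx_sum_row; apply: subspace_sum => // i _.
by case: sU => _ _ UZ; apply: UZ.
Qed.

Lemma subspaceB U u v : subspace U -> U u -> U v -> U (u - v).
Proof. by case=> _ UD UZ Uu Uv; rewrite -scaleN1r; apply/UD/UZ. Qed.

Lemma subspace_rowspace U :
  subspace U -> exists m (B : 'M[F]_(m, n)), forall v, U v <-> (v <= B)%MS.
Proof.
move=> sU.
have rowspace_of m (B : 'M_(m, n)) :
    (forall i, U (row i B)) -> (forall v, U v -> (v <= B)%MS) ->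
    forall v, U v <-> (v <= B)%MS.
  by move=> UB BU v; split=> [/BU //|/submxP [x ->]]; apply: subspace_mulmx.
suff [m [B [UB [BU|]]]] : exists m (B : 'M_(m, n)), (forall i, U (row i B)) /\
    ((forall v, U v -> (v <= B)%MS) \/ (n < \rank B)%N).
- by exists m, B; apply: rowspace_of.
- by rewrite ltnNge rank_leq_col.
elim: n.+1 => [|k [m [B [UB [BU|kB]]]]].
  by exists 0%N, 0; split; [case | right].
- by exists m, B; split=> //; left.
have [BU|] := classic (forall v, U v -> (v <= B)%MS); first by exists m, B; split=> //; left.
move=> /not_all_ex_not [v /(imply_to_and (U v)) [Uv vB]].
exists (m + 1)%N, (col_mx B v); split.
  by move=> i; rewrite -[i]splitK; case: (split i) => j; rewrite ?rowKu ?rowKd ?ord1 ?row_id.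
right; apply: leq_ltn_trans kB (rank_ltmx _).
rewrite ltmxE -addsmxE addsmxSl /=; apply: contra_notN vB => /(submx_trans _); apply.
by rewrite -addsmxE addsmxSr.
Qed.

Lemma rank_lt_rowspace U W m1 m2 (B1 : 'M_(m1, n)) (B2 : 'M_(m2, n)) w :
  (forall v, U v <-> (v <= B1)%MS) -> (forall v, W v <-> (v <= B2)%MS) ->
  sub_le U W -> W w -> ~ U w -> (\rank B1 < \rank B2)%N.
Proof.
move=> UB1 WB2 UW Ww Uw; apply: rank_ltmx; rewrite ltmxE; apply/andP; split.
  by apply/row_subP => i; apply/WB2/UW/UB1; apply: row_sub.
by apply/negP => B2B1; apply/Uw/UB1; apply: submx_trans B2B1; apply/WB2.
Qed.

Lemma subspace_chain_stable (U : nat -> vset F n) :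
  (forall i, subspace (U i)) -> (forall i, sub_le (U i) (U i.+1)) ->
  exists2 i, (i <= n)%N & sub_le (U i.+1) (U i).
Proof.
move=> sU incU.
suff [[i lt_in stable]|[m [B [_ /leq_trans/(_ (rank_leq_col B))]]]] :
    (exists2 i, (i < n.+1)%N & sub_le (U i.+1) (U i)) \/
    exists m (B : 'M_(m, n)), (forall v, U n.+1 v <-> (v <= B)%MS) /\ (n.+1 <= \rank B)%N.
- by exists i.
- by rewrite ltnn.
elim: n.+1 => [|k [[i ik stable]|[m [B [UB kB]]]]].
- by right; have [m [B UB]] := subspace_rowspace (sU 0%N); exists m, B.
- by left; exists i => //; apply: ltnW.
have [stable|] := classic (sub_le (U k.+1) (U k)); first by left; exists k.
move=> /not_all_ex_not [v /(imply_to_and (U k.+1 v)) [Uv nUv]]; right.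
have [m' [B' UB']] := subspace_rowspace (sU k.+1); exists m', B'; split=> //.
exact: leq_ltn_trans kB (rank_lt_rowspace UB UB' (incU k) Uv nUv).
Qed.

Lemma subspace_minimal (P : vset F n -> Prop) X : subspace X -> P X ->
  exists Y, [/\ subspace Y, P Y &
    forall Z, subspace Z -> P Z -> sub_le Z Y -> sub_le Y Z].
Proof.
move=> sX PX; have [m [B XB]] := subspace_rowspace sX.
move rB: (\rank B) => r.
elim/ltn_ind: r m B X sX PX XB rB => r IH m B X sX PX XB rB.
have [[Z [sZ PZ ZX nXZ]]|minX] :=
  classic (exists Z, [/\ subspace Z, P Z, sub_le Z X & ~ sub_le X Z]); last first.
  exists X; split=> // Z sZ PZ ZX; apply: NNPP => nXZ; apply: minX; by exists Z.
case/not_all_ex_not: nXZ => w /(imply_to_and (X w)) [Xw Zw].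
have [m' [B' ZB']] := subspace_rowspace sZ.
apply: (IH (\rank B') _ m' B' Z) => //; rewrite -rB.
exact: rank_lt_rowspace ZB' XB ZX Xw Zw.
Qed.

Lemma subspace_complement X :
  subspace X -> ~ (forall v, X v) ->
  exists k (K : 'M[F]_(k, n)), [/\ (0 < k)%N,
    forall w, exists u x, X u /\ w = u + x *m K
    & forall x, X (x *m K) -> x = 0].
Proof.
move=> sX nX; have [m [B XB]] := subspace_rowspace sX.
pose C := (B^C)%MS; exists (\rank C), (row_base C); split.
- rewrite mxrank_compl subn_gt0 ltn_neqAle rank_leq_col andbT.
  by apply: contra_notN nX => /submx_full fullB v; apply/XB/fullB.
- move=> w; have /sub_addsmxP [[a b] /= ->] : (w <= B + C)%MS.
    by apply: submx_full; apply: addsmx_compl_full.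
  have /submxP [x ->] : (b *m C <= row_base C)%MS by rewrite eq_row_base submxMl.
  by exists (a *m B), x; split=> //; apply/XB; apply: submxMl.
move=> x /XB xKB; apply/eqP; rewrite -(mulmx_free_eq0 _ (row_base_free C)).
have xKC : (x *m row_base C <= C)%MS by rewrite -(eq_row_base C) submxMl.
by rewrite -submx0 -(capmx_compl B) sub_capmx xKB xKC.
Qed.

End Subspaces.

Section Submodules.
Variables (F : fieldType) (A : falgType F) (n : nat) (rho : A -> 'M[F]_n).
Implicit Types (N U W X : vset F n).

Lemma issub_subspace U : issub rho U -> subspace U.
Proof. by case=> *; split. Qed.

Lemma issubT : issub rho (fun _ => True).
Proof. by []. Qed.

Lemma issub0 : issub rho (@zero_set F n).
Proof. by split=> [|u v -> ->|c u ->|a u ->]; rewrite /zero_set ?addr0 ?scaler0 ?mul0mx. Qed.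

Lemma rad_eq U N : issub rho N -> relsimple rho N U ->
  (forall X, issub rho X -> sub_le X U -> (exists v, U v /\ ~ X v) -> sub_le X N) ->
  Defs.rad rho U = N.
Proof.
move=> sN rNU maxN; have [_ NU [x [Ux Nx]] _] := rNU.
apply: vset_ext => [v [_]|v Nv]; first exact.
split=> [|W sW rWU]; first exact: NU.
have [_ WU [y [Uy Wy]] simpW] := rWU.
have WN := maxN W sW WU (ex_intro _ y (conj Uy Wy)).
by case: (simpW N sN WN NU) => [/(_ v Nv) //|UN]; case: Nx; apply: UN.
Qed.

Lemma rad_zero U : sub_le U (@zero_set F n) -> Defs.rad rho U = U.
Proof.
move=> U0; apply: vset_ext => [v [] //|v Uv]; split=> // W [W0 _ _ _] _.
by rewrite (U0 v Uv).
Qed.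

Lemma relsoc_issub N : issub rho (relsoc rho N).
Proof.
split=> [|u v Hu Hv|c u Hu|a u Hu] X sX NX WX; case: (sX) => X0 XD XZ XM //.
- by apply: XD; [apply: Hu | apply: Hv].
- by apply: XZ; apply: Hu.
- by apply: XM; apply: Hu.
Qed.

Hypothesis uni : uniserial rho.

Lemma minimal_cover N : issub rho N -> ~ (forall v, N v) ->
  exists W, relsimple rho N W /\
    forall X, issub rho X -> (exists v, X v /\ ~ N v) -> sub_le W X.
Proof.
move=> sN /not_all_ex_not [w Nw].
pose P X := issub rho X /\ exists v, X v /\ ~ N v.
have [|W [_ [sW [x [Wx Nx]]] minW]] := @subspace_minimal _ _ P _ (issub_subspace issubT).
  by split=> //; exists w.
have leastW X : issub rho X -> (exists v, X v /\ ~ N v) -> sub_le W X.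
  move=> sX NX; case: (uni sW sX) => // XW.
  exact: minW (issub_subspace sX) (conj sX NX) XW.
exists W; split=> //; split=> //.
- by case: (uni sN sW) => // WN; case: Nx; apply: WN.
- by exists x.
move=> X sX NX XW; have [[v [Xv Nv]]|NXv] := classic (exists v, X v /\ ~ N v).
  by right; apply: leastW => //; exists v.
by left=> v Xv; apply: NNPP => Nv; apply: NXv; exists v.
Qed.

Lemma sub_relsoc N : sub_le N (relsoc rho N).
Proof. by move=> v Nv X _ NX _; apply: NX. Qed.

Lemma relsoc_cover N : issub rho N -> ~ (forall v, N v) ->
  relsimple rho N (relsoc rho N) /\
    forall X, issub rho X -> (exists v, X v /\ ~ N v) -> sub_le (relsoc rho N) X.
Proof.
move=> sN nN; have [W [rNW leastW]] := minimal_cover sN nN.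
suff -> : relsoc rho N = W by [].
have [sW NW _ _] := rNW.
apply: vset_ext => [v socv|v Wv X _ _ WX]; last exact: WX rNW _ Wv.
apply: socv => // W' rNW'; have [sW' NW' NW'x simpW'] := rNW'.
case: (simpW' W sW NW (leastW W' sW' NW'x)) => // WN.
by case: rNW => _ _ [x [Wx Nx]] _; case: Nx; apply: WN.
Qed.

End Submodules.

Section SocleSeries.
Variables (F : fieldType) (A : falgType F) (n : nat) (rho : A -> 'M[F]_n).
Hypothesis uni : uniserial rho.
Implicit Types (U X : vset F n).
Notation S := (socpow rho).

Lemma socpowS i : S i.+1 = relsoc rho (S i).
Proof. by []. Qed.

Lemma socpow_issub i : issub rho (S i).
Proof. by elim: i => [|i IH]; [exact: issub0 | rewrite socpowS; apply: relsoc_issub]. Qed.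

Lemma socpow_mono i j : (i <= j)%N -> sub_le (S i) (S j).
Proof.
move=> /subnK <-; elim: (j - i)%N => [//|k IH] v /IH.
by rewrite addSn socpowS; apply: sub_relsoc.
Qed.

Definition socle_length e :=
  (forall v, S e v) /\ forall j, (j < e)%N -> ~ (forall v, S j v).

Lemma exists_socle_length : exists e, socle_length e.
Proof.
have [i _ stable] := subspace_chain_stable
  (fun i => issub_subspace (socpow_issub i)) (fun i => socpow_mono (leqnSn i)).
have Si : forall v, S i v.
  apply: NNPP => nS; have [[_ _ [v [Sv nSv]] _] _] := relsoc_cover uni (socpow_issub i) nS.
  by apply/nSv/stable.
by have [e [Se mine]] := @ex_least_nat (fun j => forall v, S j v) i Si; exists e.
Qed.

Variable e : nat.
Hypothesis He : socle_length e.

Lemma socpow_whole i : (e <= i)%N -> forall v, S i v.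
Proof. by move=> ei v; apply: (socpow_mono ei); case: He. Qed.

Lemma socpow_relsimple i : (i < e)%N -> relsimple rho (S i) (S i.+1).
Proof.
move=> ie; case: He => _ /(_ i ie) nS.
by case: (relsoc_cover uni (socpow_issub i) nS).
Qed.

Lemma socpow_strict i j : (i < j)%N -> (j <= e)%N -> exists v, S j v /\ ~ S i v.
Proof.
move=> ij je; have [_ _ [v [Sv nSv]] _] := socpow_relsimple (leq_trans ij je).
by exists v; split=> //; apply: (socpow_mono ij).
Qed.

Lemma socpow_subset_leq i j : (j <= e)%N -> sub_le (S j) (S i) -> (j <= i)%N.
Proof.
move=> je ji; rewrite leqNgt; apply/negP => ij.
by have [v [Sv nSv]] := socpow_strict ij je; apply/nSv/ji.
Qed.

Lemma socpow_cover i U : issub rho U -> (i < e)%N ->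
  sub_le U (S i.+1) -> ~ sub_le U (S i) -> U = S i.+1.
Proof.
move=> sU ie US nUS; have [_ _ _ simp] := socpow_relsimple ie.
have SU : sub_le (S i) U by case: (uni (socpow_issub i) sU) => // US'; case: nUS.
by case: (simp U sU SU US) => // SU'; apply: vset_ext.
Qed.

Lemma issub_socpow U : issub rho U -> exists2 i, (i <= e)%N & U = S i.
Proof.
move=> sU; have Ue : sub_le U (S e) by move=> v _; case: He.
have [[|i] [Ui mini]] := @ex_least_nat (fun i => sub_le U (S i)) e Ue.
  by exists 0%N => //; apply: vset_ext => // v ->; case: sU.
have ie : (i < e)%N.
  by rewrite ltnNge; apply/negP => ei; apply: (mini e) Ue; rewrite ltnS.
exists i.+1 => //; apply: socpow_cover => //; exact: mini.
Qed.

Lemma radpow_socpow l : radpow rho l = S (e - l).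
Proof.
elim: l => [|l IH]; first by rewrite subn0; apply: vset_ext => // v _; apply: socpow_whole.
have -> : radpow rho l.+1 = Defs.rad rho (radpow rho l) by [].
rewrite IH subnS; case El: (e - l)%N => [|k] /=; first exact: rad_zero.
have ke : (k < e)%N by rewrite -El leq_subr.
apply: rad_eq (socpow_issub k) (socpow_relsimple ke) _ => X sX XS [v [Sv nXv]].
by apply: NNPP => nXS; apply: nXv; rewrite (socpow_cover sX ke XS nXS).
Qed.

Lemma loewy_length_socle d : loewy_length rho d -> d = e.
Proof.
case=> Jd0 minJ; have [ed|de|//] := ltngtP e d.
  by case: (minJ e ed) => v; rewrite radpow_socpow subnn.
have [v [Sv nS0v]] : exists v, S (e - d) v /\ ~ S 0 v.
  by apply: socpow_strict; rewrite ?subn_gt0 ?leq_subr.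
by case: nS0v; apply: Jd0; rewrite radpow_socpow.
Qed.

Lemma socpow_pred_relsimple : (0 < e)%N -> relsimple rho (S e.-1) (fun _ => True).
Proof.
move=> e_gt0; have := @socpow_relsimple e.-1; rewrite ltn_predL prednK // => /(_ e_gt0).
by have -> : S e = (fun _ => True) by apply: vset_ext => // v _; case: He.
Qed.

End SocleSeries.

Section Homomorphisms.
Variables (F : fieldType) (A : falgType F) (n1 n2 : nat).
Variables (rho1 : A -> 'M[F]_n1) (rho2 : A -> 'M[F]_n2).
Implicit Types (f g h : 'M[F]_(n1, n2)) (X Y : vset F n1) (V : vset F n2).

Definition preim f V : vset F n1 := fun v => V (v *m f).
Definition img X f : vset F n2 := fun w => exists v, X v /\ w = v *m f.
Definition range f : vset F n2 := fun w => exists v, w = v *m f.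
Definition ker f : vset F n1 := preim f (@zero_set F n2).

Lemma preim_issub f V : is_hom rho1 rho2 f -> issub rho2 V -> issub rho1 (preim f V).
Proof.
move=> hf [V0 VD VZ VM]; split; rewrite /preim.
- by rewrite mul0mx.
- by move=> u v Vu Vv; rewrite mulmxDl; apply: VD.
- by move=> c u Vu; rewrite -scalemxAl; apply: VZ.
- by move=> a u Vu; rewrite -mulmxA hf mulmxA; apply: VM.
Qed.

Lemma img_issub f X : is_hom rho1 rho2 f -> issub rho1 X -> issub rho2 (img X f).
Proof.
move=> hf [X0 XD XZ XM]; split.
- by exists 0; rewrite mul0mx.
- by move=> _ _ [u [Xu ->]] [v [Xv ->]]; exists (u + v); rewrite mulmxDl; split=> //; apply: XD.
- by move=> c _ [u [Xu ->]]; exists (c *: u); rewrite scalemxAl; split=> //; apply: XZ.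
- move=> a _ [u [Xu ->]]; exists (u *m rho1 a).
  by rewrite -mulmxA -hf mulmxA; split=> //; apply: XM.
Qed.

Lemma range_img f : range f = img (fun _ => True) f.
Proof. by apply: vset_ext => w [v]; [move=> ->| case=> _ ->]; exists v. Qed.

Lemma range_issub f : is_hom rho1 rho2 f -> issub rho2 (range f).
Proof. by move=> hf; rewrite range_img; apply: img_issub. Qed.

Lemma is_homB f g (c : F) :
  is_hom rho1 rho2 f -> is_hom rho1 rho2 g -> is_hom rho1 rho2 (f - c *: g).
Proof. by move=> hf hg a; rewrite mulmxBr mulmxBl hf -scalemxAr hg scalemxAl. Qed.

Lemma preim_img f Y : issub rho1 Y -> sub_le (ker f) Y -> preim f (img Y f) = Y.
Proof.
move=> [_ YD _ _] kerY; apply: vset_ext => [v [u [Yu Euv]]|v Yv]; last by exists v.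
have Yvu : Y (v - u) by apply: kerY; rewrite /ker /preim /zero_set mulmxBl Euv subrr.
by rewrite -(subrK u v); apply: YD.
Qed.

End Homomorphisms.

Lemma schur_closed (F : closedFieldType) (A : falgType F) (n1 n2 : nat)
  (rho1 : A -> 'M[F]_n1) (rho2 : A -> 'M[F]_n2) (X : vset F n1) (U : vset F n2)
  (g h : 'M[F]_(n1, n2)) :
  issub rho1 X -> relsimple rho1 X (fun _ => True) -> issub rho2 U ->
  is_hom rho1 rho2 g -> is_hom rho1 rho2 h -> sub_le (range g) (range h) ->
  (forall v, X v -> U (v *m g)) -> (forall v, X v -> U (v *m h)) ->
  exists c, forall v, U (v *m (g - c *: h)).
Proof.
move=> sX [_ _ [y [_ Xy]] maxX] sU hg hh gh Xg Xh.
have sUs := issub_subspace sU.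
have nX : ~ (forall v, X v) by move/(_ y).
have [k [K [k_gt0 decomp indep]]] := subspace_complement (issub_subspace sX) nX.
(* Row i of P expresses g on the i-th basis vector of a complement K of X as h
   of a vector of that complement, modulo U; an eigenvector z of P with
   eigenvalue c then gives z K outside X with (g - c h)(z K) in U. *)
have /fin_all_exists [x Ux] : forall i : 'I_k, exists x : 'rV_k, U (row i K *m g - x *m K *m h).
  move=> i; have [w ->] := gh _ (ex_intro _ (row i K) erefl).
  have [u [x [Xu ->]]] := decomp w.
  by exists x; rewrite mulmxDl addrK; apply: Xh.
pose P := \matrix_(i < k) x i.
have [c /eigenvalueP [z Pz nz]] : exists c, eigenvalue P c.
  have [c Pc] : exists c, root (char_poly P) c.
    by apply/closed_rootP; rewrite size_char_poly eqSS -lt0n.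
  by exists c; rewrite eigenvalue_root_char.
exists c.
have Uz : U ((z *m K) *m (g - c *: h)).
  have -> : (z *m K) *m (g - c *: h) = z *m (K *m g - P *m K *m h).
    by rewrite !mulmxBr !mulmxA Pz -!mulmxA -scalemxAl !scalemxAr.
  apply: subspace_mulmx => // i.
  by rewrite linearB /= !row_mul rowK; apply: Ux.
have sZ := preim_issub (is_homB c hg hh) sU.
have XZ : sub_le X (preim (g - c *: h) U).
  move=> v Xv; rewrite /preim mulmxBr -scalemxAr.
  by apply: subspaceB => //; [apply: Xg | case: sUs => _ _ UZ; apply/UZ/Xh].
case: (maxX _ sZ XZ (fun _ _ => I)) => [ZX|ZT v]; last exact: ZT.
by case/eqP: nz; apply: indep; apply: ZX.
Qed.

Section Composition.
Variables (F : fieldType) (A : falgType F) (n1 n2 : nat).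
Variables (rho1 : A -> 'M[F]_n1) (rho2 : A -> 'M[F]_n2).
Hypotheses (uni1 : uniserial rho1) (uni2 : uniserial rho2).
Variables (e1 e2 : nat).
Hypotheses (He1 : socle_length rho1 e1) (He2 : socle_length rho2 e2).
Notation T := (socpow rho1).
Notation S := (socpow rho2).
Implicit Types (f : 'M[F]_(n1, n2)).

Lemma preim_socpowS f l i m : is_hom rho1 rho2 f -> (l <= e2)%N -> range f = S l ->
  (i < l)%N -> preim f (S i) = T m -> (m < e1)%N /\ preim f (S i.+1) = T m.+1.
Proof.
move=> hf le2 rf il Pi; have ie2 : (i < e2)%N := leq_trans il le2.
have [k ke1 Pk] := issub_socpow uni1 He1 (preim_issub hf (socpow_issub rho2 i.+1)).
have [w [Sw nSw]] := socpow_strict uni2 He2 (ltnSn i) ie2.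
have [v Ew] : range f w by rewrite rf; apply: socpow_mono Sw.
have mk : (m < k)%N.
  rewrite ltnNge; apply/negP => km; apply: nSw; rewrite Ew.
  have Tkv : T k v by rewrite -Pk /preim -Ew.
  by move: (socpow_mono km Tkv); rewrite -Pi.
split; first exact: leq_trans mk ke1.
have TP : sub_le (T m.+1) (preim f (S i.+1)) by rewrite Pk; apply: socpow_mono.
have kerT : sub_le (ker f) (T m.+1).
  move=> u fu0; apply: (socpow_mono (leqnSn m)); rewrite -Pi /preim fu0.
  by case: (socpow_issub rho2 i).
have <- : img (T m.+1) f = S i.+1.
  apply: (socpow_cover uni2 He2 (img_issub hf (socpow_issub rho1 m.+1)) ie2).
    by move=> _ [u [Tu ->]]; apply: TP.
  move=> YS; have : (m.+1 <= m)%N; last by rewrite ltnn.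
  apply: (socpow_subset_leq uni1 He1 (leq_trans mk ke1)) => u Tu.
  by rewrite -Pi; apply: YS; exists u.
by apply: preim_img => //; apply: socpow_issub.
Qed.

Lemma preim_socpow f l : is_hom rho1 rho2 f -> (l <= e2)%N -> range f = S l ->
  (l <= e1)%N /\ forall i, (i <= l)%N -> preim f (S i) = T (e1 - l + i).
Proof.
move=> hf le2 rf.
have [j je1 Pj] := issub_socpow uni1 He1 (preim_issub hf (socpow_issub rho2 0)).
have chain i : (i <= l)%N -> (j + i <= e1)%N /\ preim f (S i) = T (j + i).
  elim: i => [_|i IH il]; first by rewrite addn0.
  have [jie1 PS] := preim_socpowS hf le2 rf il (IH (ltnW il)).2.
  by rewrite addnS.
have [jle Pl] := chain l (leqnn l).
have jl : (j + l)%N = e1.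
  apply/eqP; rewrite eqn_leq jle leqNgt; apply/negP => lt.
  by case: He1 => _ /(_ _ lt); apply=> v; rewrite -Pl /preim -rf; exists v.
split=> [|i il]; first by rewrite -jl leq_addl.
by rewrite -jl addnK; apply: (chain i il).2.
Qed.

Lemma Sset_range f l : is_hom rho1 rho2 f -> (0 < l)%N -> (l <= e2)%N -> range f = S l ->
  Sset rho1 rho2 e1 e2 l.
Proof.
move=> hf l_gt0 le2 rf; have [le1 Pf] := preim_socpow hf le2 rf.
split; first by rewrite l_gt0 leq_min le1 le2.
exists f; split=> // [v|w]; last by rewrite -rf.
by rewrite (radpow_socpow uni1 He1) -[(e1 - l)%N]addn0 -Pf.
Qed.

Lemma range_quot_rad_iso_soc f l : quot_rad_iso_soc rho1 rho2 l f -> range f = S l.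
Proof. by case=> _ _ Ef; apply: vset_ext => w /Ef. Qed.

End Composition.

Section Basis.
Variables (F : closedFieldType) (A : falgType F) (n1 n2 : nat).
Variables (rho1 : A -> 'M[F]_n1) (rho2 : A -> 'M[F]_n2).
Hypotheses (uni1 : uniserial rho1) (uni2 : uniserial rho2).
Variables (e1 e2 : nat).
Hypotheses (He1 : socle_length rho1 e1) (He2 : socle_length rho2 e2).
Notation S := (socpow rho2).
Notation inS := (Sset rho1 rho2 e1 e2).
Variable alpha : nat -> 'M[F]_(n1, n2).
Hypothesis alphaS : forall l, inS l -> quot_rad_iso_soc rho1 rho2 l (alpha l).
Notation K := (minn e1 e2).

Lemma alphaP l : inS l ->
  [/\ is_hom rho1 rho2 (alpha l), (l <= e2)%N & range (alpha l) = S l].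
Proof.
move=> Sl; have [/andP [_]] := Sl; rewrite leq_min => /andP [_ le2] _.
have /alphaS qa := Sl; split=> //; first by case: qa.
exact: range_quot_rad_iso_soc qa.
Qed.

Lemma comb_alpha_socpow (P : pred nat) (c : nat -> F) l :
  (forall m, ~ inS m -> c m = 0) -> (forall m, (l < m)%N -> P m -> c m = 0) ->
  sub_le (range (\sum_(m <- index_iota 1 K.+1 | P m) c m *: alpha m)) (S l).
Proof.
move=> cS cl _ [v ->]; have sS := issub_subspace (socpow_issub rho2 l).
rewrite mulmx_sumr; apply: subspace_sum => // m Pm.
have [lm|ml] := ltnP l m; first by rewrite cl // scale0r mulmx0; case: sS.
have [Sm|nSm] := classic (inS m); last by rewrite cS // scale0r mulmx0; case: sS.
have [_ _ ra] := alphaP Sm; rewrite -scalemxAr; case: sS => _ _ SZ; apply: SZ.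
by apply: (socpow_mono ml); rewrite -ra; exists v.
Qed.

Lemma coef_alpha_top (c : nat -> F) l :
  (forall m, ~ inS m -> c m = 0) -> (forall m, (l.+1 < m)%N -> c m = 0) ->
  \sum_(1 <= m < K.+1) c m *: alpha m = 0 -> c l.+1 = 0.
Proof.
move=> cS cl sum0; have [Sl|] := classic (inS l.+1); last exact: cS.
have [_ le2 ra] := alphaP Sl; apply: NNPP => /eqP nz.
have [/andP [_ lK] _] := Sl.
move: sum0; rewrite (bigD1_seq l.+1) ?mem_index_iota ?iota_uniq //=.
set R := \sum_(m <- _ | _) _ => sum0.
have RS : sub_le (range R) (S l).
  apply: comb_alpha_socpow => // m lm /negbTE ml; apply: cl.
  by rewrite ltn_neqAle eq_sym ml lm.
have [w [Sw nSw]] := socpow_strict uni2 He2 (ltnSn l) le2.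
move: nSw; have [v ->] : range (alpha l.+1) w by rewrite ra.
have -> : alpha l.+1 = (- (c l.+1)^-1) *: R.
  have cR : c l.+1 *: alpha l.+1 = - R by apply/eqP; rewrite -addr_eq0 sum0.
  by rewrite scaleNr -scalerN -cR scalerA mulVf // scale1r.
rewrite -scalemxAr.
have [_ _ SZ] := issub_subspace (socpow_issub rho2 l).
by case; apply/SZ/RS; exists v.
Qed.

Lemma alpha_independent (c : nat -> F) : (forall m, ~ inS m -> c m = 0) ->
  \sum_(1 <= m < K.+1) c m *: alpha m = 0 -> forall m, c m = 0.
Proof.
move=> cS sum0.
suff above l : (forall m, (l < m)%N -> c m = 0) -> forall m, c m = 0.
  apply: (above K) => m Km; apply: cS => [[/andP [_ mK] _]].
  by rewrite leqNgt Km in mK.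
elim: l => [|l IH] cl.
  by case=> [|m]; [apply: cS => [[/andP []]] | apply: cl].
apply: IH => m; rewrite leq_eqVlt => /predU1P [<-|]; last exact: cl.
exact: coef_alpha_top cS cl sum0.
Qed.

Lemma alpha_span l (f : 'M[F]_(n1, n2)) :
  (l <= e2)%N -> is_hom rho1 rho2 f -> sub_le (range f) (S l) ->
  exists c : nat -> F, (forall m, ~ inS m -> c m = 0) /\
    f = \sum_(1 <= m < K.+1) c m *: alpha m.
Proof.
elim: l f => [|l IH] f le2 hf fS.
  exists (fun _ => 0); split=> //; rewrite big1 => [|m _]; last by rewrite scale0r.
  by apply/row_matrixP => i; rewrite row0 rowE; apply: fS; exists (delta_mx 0 i).
have [fSl|nfSl] := classic (sub_le (range f) (S l)); first exact: IH f (ltnW le2) hf fSl.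
have rf := socpow_cover uni2 He2 (range_issub hf) le2 fS nfSl.
have Sl := Sset_range uni1 uni2 He1 He2 hf (ltn0Sn l) le2 rf.
have [ha _ ra] := alphaP Sl.
have [le1 Pf] := preim_socpow uni1 uni2 He1 He2 hf le2 rf.
have [_ Pa] := preim_socpow uni1 uni2 He1 He2 ha le2 ra.
have Jl : (e1 - l.+1 + l)%N = e1.-1 by lia.
have [c Sfc] : exists c, forall v, S l (v *m (f - c *: alpha l.+1)).
  apply: schur_closed (socpow_issub rho1 _)
    (socpow_pred_relsimple uni1 He1 (leq_ltn_trans (leq0n l) le1))
    (socpow_issub rho2 l) hf ha _ _ _.
  - by rewrite rf ra.
  - by move=> v; rewrite -Jl -(Pf l (leqnSn l)).
  - by move=> v; rewrite -Jl -(Pa l (leqnSn l)).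
have fcS : sub_le (range (f - c *: alpha l.+1)) (S l) by move=> _ [v ->]; apply: Sfc.
have [c' [c'S Ec']] := IH _ (ltnW le2) (is_homB c hf ha) fcS.
exists (fun m => c' m + (if m == l.+1 then c else 0)); split.
  by move=> m nSm; rewrite c'S // add0r; case: eqP => // Em; case: nSm; rewrite Em.
rewrite -(subrK (c *: alpha l.+1) f) Ec'; apply/esym.
under eq_bigr do rewrite scalerDl.
rewrite big_split /=; congr (_ + _).
rewrite (bigD1_seq l.+1) ?mem_index_iota ?iota_uniq ?ltnS ?leq_min ?le1 ?le2 //= eqxx.
by rewrite big1 ?addr0 // => m /negbTE ->; rewrite scale0r.
Qed.

End Basis.

Theorem proposition4p2 (F : closedFieldType) (A : falgType F) (n1 n2 : nat)
  (rho1 : A -> 'M[F]_n1) (rho2 : A -> 'M[F]_n2) (d1 d2 : nat)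
  (alpha : nat -> 'M[F]_(n1, n2)) :
  is_rmodule rho1 -> is_rmodule rho2 ->
  (0 < n1)%N -> (0 < n2)%N ->
  uniserial rho1 -> uniserial rho2 ->
  loewy_length rho1 d1 -> loewy_length rho2 d2 ->
  (forall l, Sset rho1 rho2 d1 d2 l -> quot_rad_iso_soc rho1 rho2 l (alpha l)) ->
  (forall c : nat -> F, (forall l, ~ Sset rho1 rho2 d1 d2 l -> c l = 0) ->
     \sum_(1 <= l < (minn d1 d2).+1) c l *: alpha l = 0 ->
     forall l, c l = 0) /\
  (forall f : 'M[F]_(n1, n2), is_hom rho1 rho2 f ->
     exists c : nat -> F, (forall l, ~ Sset rho1 rho2 d1 d2 l -> c l = 0) /\
       f = \sum_(1 <= l < (minn d1 d2).+1) c l *: alpha l).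
Proof.
move=> _ _ _ _ uni1 uni2 ll1 ll2 alphaS.
have [e1 He1] := exists_socle_length uni1.
have [e2 He2] := exists_socle_length uni2.
rewrite (loewy_length_socle uni1 He1 ll1) (loewy_length_socle uni2 He2 ll2) in alphaS *.
split=> [c|f hf]; first exact: (alpha_independent uni2 He2 alphaS (c := c)).
apply: (alpha_span uni1 uni2 He1 He2 alphaS (leqnn e2) hf) => w _.
by case: He2.
Qed.
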